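(* Fix a constant $\lambda\ge0$ and $R>0$, and suppose $\Gamma\cap\mathcal O$ is the straight segment $\{(x,0):-R<x<R\}$, where $\mathcal O$ is the open disc of radius $R$ centered at the origin, with $\boldsymbol n=(0,1)^T$ or $\boldsymbol n=(0,-1)^T$ its unit normal. Let the collocation points be $\boldsymbol q^{(1)}_k=(\eta^{(1)}_kR,0)$, $k=1,2,3$, with $\eta^{(1)}_k$ distinct; $\boldsymbol q^{(2)}_k=(\eta^{(2)}_kR,0)$, $k=1,2$, with $\eta^{(2)}_1\ne\eta^{(2)}_2$; $\boldsymbol q^{(3)}=(\eta^{(3)}R,0)$; and $\boldsymbol q^{(4)}_k=R\boldsymbol\xi_k$, $k=1,2,3$, where $\boldsymbol\xi_1,\boldsymbol\xi_2,\boldsymbol\xi_3$ are non-collinear points; all constants $\eta^{(d)}_k,\boldsymbol\xi_k$ are independent of $R$ and all points lie in $\mathcal O$. Then the $15\times15$ collocation matrix $\boldsymbol M$ defined in the context is independent of $R$ and invertible.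
   Context: Let $\phi_1=1,\phi_2=x,\phi_3=y,\phi_4=x^2,\phi_5=y^2,\phi_6=xy$. Unknowns are $\boldsymbol c_1,\dots,\boldsymbol c_6\in\mathbb R^2$ (components $c_j^{(1)},c_j^{(2)}$) and $d_1,d_2,d_3\in\mathbb R$, i.e. a vector in $\mathbb R^{15}$, representing $\hat{\boldsymbol v}(\boldsymbol x)=\sum_{j=1}^6\boldsymbol c_j\phi_j(\boldsymbol x/R)$, $\hat q(\boldsymbol x)=\sum_{j=1}^3\frac{d_j}{R}\phi_j(\boldsymbol x/R)$. The matrix $\boldsymbol M$ is the matrix of the linear map sending the unknowns to the 15 quantities: (i) for $k=1,2,3$: $\sum_{j=1}^6\phi_j(\boldsymbol q^{(1)}_k/R)\boldsymbol c_j\in\mathbb R^2$; (ii) for $k=1,2$: $\sum_{j=1}^6\big(\boldsymbol c_j\nabla\phi_j^T+\nabla\phi_j\boldsymbol c_j^T\big)(\boldsymbol q^{(2)}_k/R)\,\boldsymbol n(\boldsymbol q^{(2)}_k)-\sum_{j=1}^3d_j\phi_j(\boldsymbol q^{(2)}_k/R)\boldsymbol n(\boldsymbol q^{(2)}_k)\in\mathbb R^2$; (iii) $\sum_{j=1}^6\big((\Delta-\lambda)\phi_j\big)(\boldsymbol q^{(3)}/R)\,\boldsymbol c_j-\sum_{j=1}^3\nabla\phi_j(\boldsymbol q^{(3)}/R)\,d_j\in\mathbb R^2$; (iv) for $k=1,2,3$: $\sum_{j=1}^6\big(\partial_x\phi_j\,c_j^{(1)}+\partial_y\phi_j\,c_j^{(2)}\big)(\boldsymbol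 q^{(4)}_k/R)\in\mathbb R$ (with any fixed ordering of rows and columns). These encode collocation of the Dirichlet condition, the traction (Neumann) condition, the Brinkman momentum equation $\Delta\hat{\boldsymbol v}-\lambda\hat{\boldsymbol v}-\nabla\hat q$, and the divergence-free condition, after scaling by powers of $R$. *)

From HB Require Import structures.
From mathcomp Require Import all_boot all_order all_algebra.
Set Implicit Arguments. Unset Strict Implicit. Unset Printing Implicit Defensive.
Import Order.TTheory GRing.Theory Num.Theory.
Local Open Scope ring_scope.

Section Colloc.
Variable R : realFieldType.

Definition pt := (R * R)%type.

Definition comp (p : pt) (a : nat) : R := if a == 0%N then p.1 else p.2.

Definition sdiv (p : pt) (r : R) : pt := (p.1 / r, p.2 / r).

(* monomial basis phi_1..phi_6 = 1, x, y, x^2, y^2, xy  (indexed 0..5) *)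
Definition phi (j : nat) (p : pt) : R :=
  match j with
  | 0 => 1 | 1 => p.1 | 2 => p.2 | 3 => p.1 ^+ 2 | 4 => p.2 ^+ 2 | _ => p.1 * p.2
  end.

Definition dphi (j : nat) (a : nat) (p : pt) : R :=
  if a == 0%N then
    match j with
    | 0 => 0 | 1 => 1 | 2 => 0 | 3 => 2 * p.1 | 4 => 0 | _ => p.2 end
  else
    match j with
    | 0 => 0 | 1 => 0 | 2 => 1 | 3 => 0 | 4 => 2 * p.2 | _ => p.1 end.

Definition lapphi (j : nat) (p : pt) : R :=
  match j with 3 => 2 | 4 => 2 | _ => 0 end.

(* Unknown ordering: column c < 12 is c_j^(b) with j = c %/ 2, b = c %% 2
   (j = 0..5 for c_1..c_6, b = 0,1 for the two components);
   column 12 + j is d_{j+1}, j = 0..2.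
   Row ordering: rows 2k+a (k<3): block (i), component a;
   rows 6+2k+a (k<2): block (ii); rows 10+a: block (iii); rows 12+k: block (iv). *)
Definition colloc_entry (lam : R) (n : pt) (q1 q2 : nat -> pt) (q3 : pt)
    (q4 : nat -> pt) (Rad : R) (row col : nat) : R :=
  let isc := (col < 12)%N in
  let j := if isc then (col %/ 2)%N else (col - 12)%N in
  let b := (col %% 2)%N in
  if (row < 6)%N then
    (* (i) Dirichlet: sum_j phi_j(q1_k/R) c_j *)
    let k := (row %/ 2)%N in let a := (row %% 2)%N in
    let p := sdiv (q1 k) Rad in
    if isc then (if a == b then phi j p else 0) else 0
  else if (row < 10)%N then
    (* (ii) traction *)
    let k := ((row - 6) %/ 2)%N in let a := ((row - 6) %% 2)%N in
    let p := sdiv (q2 k) Rad in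
    let nv := n in
    if isc then
      (if a == b then dphi j 0 p * comp nv 0 + dphi j 1 p * comp nv 1 else 0)
      + dphi j a p * comp nv b
    else - (phi j p * comp nv a)
  else if (row < 12)%N then
    (* (iii) Brinkman momentum *)
    let a := (row - 10)%N in
    let p := sdiv q3 Rad in
    if isc then (if a == b then lapphi j p - lam * phi j p else 0)
    else - dphi j a p
  else
    (* (iv) divergence *)
    let k := (row - 12)%N in
    let p := sdiv (q4 k) Rad in
    if isc then dphi j b p else 0.

Definition colloc_mx lam n q1 q2 q3 q4 Rad : 'M[R]_15 :=
  \matrix_(i < 15, j < 15) colloc_entry lam n q1 q2 q3 q4 Rad i j.

Definition in_disc (Rad : R) (p : pt) : Prop := p.1 ^+ 2 + p.2 ^+ 2 < Rad ^+ 2.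

Definition collinear (a b c : pt) : Prop :=
  (b.1 - a.1) * (c.2 - a.2) - (b.2 - a.2) * (c.1 - a.1) = 0.

Definition scalept (r : R) (p : pt) : pt := (r * p.1, r * p.2).

End Colloc.

From Pilot Require Import Defs.
From HB Require Import structures.
From mathcomp Require Import all_boot all_order all_algebra.
From mathcomp Require Import ring.
Import Order.TTheory GRing.Theory Num.Theory.
Local Open Scope ring_scope.

(* Every entry of M sees the collocation points only through q / R, and the
   points are R times fixed points, so M is the matrix built at R = 1.  For
   invertibility, take a kernel vector.  On the line y = 0 the trace of each
   velocity component is c_1 + c_2 x + c_4 x^2; vanishing at three distinct
   points kills c_1, c_2, c_4.  The two traction conditions are then affine in
   x and vanish at two distinct points, which kills c_6^(1), c_3^(1) and ties
   d_1, d_2 to c_3^(2), c_6^(2).  What is left of the divergence is an affine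
   function of the point vanishing at three non-collinear points, which kills
   c_3^(2), c_5^(2), c_6^(2) and with them d_1, d_2; the momentum equation
   finishes off c_5^(1) and d_3. *)

Lemma sdiv1 {R : realFieldType} (p : pt R) : sdiv p 1 = p.
Proof. by case: p => a b; rewrite /sdiv !divr1. Qed.

Lemma sdiv_mull {R : realFieldType} (Rad e : R) :
  Rad != 0 -> sdiv (e * Rad, 0) Rad = (e, 0).
Proof. by move=> nzR; rewrite /sdiv /= mulfK // mul0r. Qed.

Lemma sdiv_scalept {R : realFieldType} (Rad : R) (p : pt R) :
  Rad != 0 -> sdiv (scalept Rad p) Rad = p.
Proof.
by move=> nzR; case: p => a b; rewrite /sdiv /scalept /= !(mulrC Rad) !mulfK.
Qed.

Lemma colloc_mx_rescale {R : realFieldType} (lam : R) (n : pt R)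
    (q1 q2 q4 p1 p2 p4 : nat -> pt R) (q3 p3 : pt R) (Rad : R) :
  (forall k, sdiv (q1 k) Rad = p1 k) -> (forall k, sdiv (q2 k) Rad = p2 k) ->
  sdiv q3 Rad = p3 -> (forall k, sdiv (q4 k) Rad = p4 k) ->
  colloc_mx lam n q1 q2 q3 q4 Rad = colloc_mx lam n p1 p2 p3 p4 1.
Proof.
move=> h1 h2 h3 h4; apply/matrixP => i j; rewrite !mxE /colloc_entry; cbv zeta.
by rewrite !sdiv1 !h1 !h2 h3 !h4.
Qed.

Lemma affine_eq0_2pts {R : idomainType} {a b y0 y1 : R} : a != b ->
  y0 + a * y1 = 0 -> y0 + b * y1 = 0 -> y0 = 0 /\ y1 = 0.
Proof.
move=> ab ha hb.
have : (a - b) * y1 = (y0 + a * y1) - (y0 + b * y1) by ring.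
rewrite ha hb subrr => /eqP; rewrite mulf_eq0 subr_eq0 (negbTE ab) /= => /eqP y1_0.
by move: ha; rewrite y1_0 mulr0 addr0.
Qed.

Lemma quadratic_eq0_3pts {R : idomainType} {a b c y0 y1 y2 : R} :
  a != b -> a != c -> b != c ->
  y0 + a * y1 + a ^+ 2 * y2 = 0 -> y0 + b * y1 + b ^+ 2 * y2 = 0 ->
  y0 + c * y1 + c ^+ 2 * y2 = 0 -> [/\ y0 = 0, y1 = 0 & y2 = 0].
Proof.
move=> ab ac bc ha hb hc.
have : (a - b) * (y1 + a * y2 + b * y2) =
    (y0 + a * y1 + a ^+ 2 * y2) - (y0 + b * y1 + b ^+ 2 * y2) by ring.
rewrite ha hb subrr => /eqP; rewrite mulf_eq0 subr_eq0 (negbTE ab) /= => /eqP hab.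
have : (a - c) * (y1 + a * y2 + c * y2) =
    (y0 + a * y1 + a ^+ 2 * y2) - (y0 + c * y1 + c ^+ 2 * y2) by ring.
rewrite ha hc subrr => /eqP; rewrite mulf_eq0 subr_eq0 (negbTE ac) /= => /eqP hac.
have [y1ay2 y2_0] := affine_eq0_2pts bc hab hac.
have y1_0 : y1 = 0 by move: y1ay2; rewrite y2_0 mulr0 addr0.
by split=> //; move: ha; rewrite y1_0 y2_0 !mulr0 !addr0.
Qed.

Lemma affine_eq0_3pts {R : realFieldType} {p q r : pt R} {c0 c1 c2 : R} :
  ~ collinear p q r ->
  c0 + c1 * p.1 + c2 * p.2 = 0 -> c0 + c1 * q.1 + c2 * q.2 = 0 ->
  c0 + c1 * r.1 + c2 * r.2 = 0 -> [/\ c0 = 0, c1 = 0 & c2 = 0].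
Proof.
rewrite /collinear => /eqP pqr hp hq hr.
set D := _ - _ in pqr.
have : c1 * D = (r.2 - p.2) * ((c0 + c1 * q.1 + c2 * q.2) - (c0 + c1 * p.1 + c2 * p.2))
              - (q.2 - p.2) * ((c0 + c1 * r.1 + c2 * r.2) - (c0 + c1 * p.1 + c2 * p.2)).
  by rewrite /D; ring.
rewrite hp hq hr subrr !mulr0 subrr => /eqP; rewrite mulf_eq0 (negbTE pqr) orbF => /eqP c1_0.
have : c2 * D = (q.1 - p.1) * ((c0 + c1 * r.1 + c2 * r.2) - (c0 + c1 * p.1 + c2 * p.2))
              - (r.1 - p.1) * ((c0 + c1 * q.1 + c2 * q.2) - (c0 + c1 * p.1 + c2 * p.2)).
  by rewrite /D; ring.
rewrite hp hq hr subrr !mulr0 subrr => /eqP; rewrite mulf_eq0 (negbTE pqr) orbF => /eqP c2_0.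
by split=> //; move: hp; rewrite c1_0 c2_0 !mul0r !addr0.
Qed.

Ltac eval_nat_arith := repeat match goal with
  | |- context [(?a %/ ?b)%N] => let v := eval vm_compute in (a %/ b)%N in change (a %/ b)%N with v
  | |- context [(?a %% ?b)%N] => let v := eval vm_compute in (a %% b)%N in change (a %% b)%N with v
  | |- context [(?a - ?b)%N] => let v := eval vm_compute in (a - b)%N in change (a - b)%N with v
  end.

Section FlatKernel.

Context {R : realFieldType} {lam s : R} {eta1 eta2 : nat -> R} {eta3 : R}.
Context {xi : nat -> pt R} {x : nat -> R}.

Let entry := colloc_entry lam (0, s) (fun k => (eta1 k, 0)) (fun k => (eta2 k, 0))
  (eta3, 0) xi 1.

Hypothesis x_ker : forall i, (i < 15)%N -> \sum_(j < 15) entry i j * x j = 0.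
Hypotheses (eta1_01 : eta1 0%N != eta1 1%N) (eta1_02 : eta1 0%N != eta1 2%N).
Hypotheses (eta1_12 : eta1 1%N != eta1 2%N) (eta2_01 : eta2 0%N != eta2 1%N).
Hypotheses (s_neq0 : s != 0) (xi_noncollinear : ~ collinear (xi 0%N) (xi 1%N) (xi 2%N)).

Ltac expand_row i :=
  rewrite -[RHS](x_ker i isT) !big_ord_recr big_ord0 /= /entry /colloc_entry;
  cbv beta zeta; eval_nat_arith; rewrite !sdiv1 /dphi /phi /lapphi /Defs.comp /=.

Lemma flat_ker_trace :
  [/\ x 0%N = 0 /\ x 1%N = 0, x 2%N = 0 /\ x 3%N = 0 & x 6%N = 0 /\ x 7%N = 0].
Proof.
have [x0 x2 x6] : [/\ x 0%N = 0, x 2%N = 0 & x 6%N = 0].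
  by apply: quadratic_eq0_3pts eta1_01 eta1_02 eta1_12 _ _ _;
    [expand_row 0%N | expand_row 2%N | expand_row 4%N]; ring.
have [x1 x3 x7] : [/\ x 1%N = 0, x 3%N = 0 & x 7%N = 0].
  by apply: quadratic_eq0_3pts eta1_01 eta1_02 eta1_12 _ _ _;
    [expand_row 1%N | expand_row 3%N | expand_row 5%N]; ring.
by [].
Qed.

Lemma flat_ker_traction :
  [/\ x 4%N = 0, x 10%N = 0, x 12%N = 2 * x 5%N & x 13%N = 2 * x 11%N].
Proof.
have [[_ _] [_ x3] [_ x7]] := flat_ker_trace.
have [x4 x10] : x 4%N = 0 /\ x 10%N = 0.
  by apply: affine_eq0_2pts eta2_01 _ _; apply: (mulfI s_neq0); rewrite mulr0;
    [expand_row 6%N | expand_row 8%N]; rewrite x3 x7; ring.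
have [x12 x13] : 2 * x 5%N - x 12%N = 0 /\ 2 * x 11%N - x 13%N = 0.
  by apply: affine_eq0_2pts eta2_01 _ _; apply: (mulfI s_neq0); rewrite mulr0;
    [expand_row 7%N | expand_row 9%N]; ring.
by split=> //; apply/esym/subr0_eq.
Qed.

Lemma flat_ker_divergence : [/\ x 5%N = 0, x 9%N = 0 & x 11%N = 0].
Proof.
have [_ [x2 _] [x6 _]] := flat_ker_trace; have [_ x10 _ _] := flat_ker_traction.
have [x5 x11 /eqP] : [/\ x 5%N = 0, x 11%N = 0 & 2 * x 9%N = 0].
  by apply: affine_eq0_3pts xi_noncollinear _ _ _;
    [expand_row 12%N | expand_row 13%N | expand_row 14%N]; rewrite x2 x6 x10; ring.
by rewrite mulf_eq0 pnatr_eq0 /= => /eqP.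
Qed.

Lemma flat_ker_momentum : x 8%N = 0 /\ x 14%N = 0.
Proof.
have [[x0 x1] [x2 x3] [x6 x7]] := flat_ker_trace; have [_ _ _ x13] := flat_ker_traction.
have [_ x9 x11] := flat_ker_divergence.
split.
  have /eqP : 2 * x 8%N = 0.
    by expand_row 10%N; rewrite x0 x2 x6 x13 x11; ring.
  by rewrite mulf_eq0 pnatr_eq0 /= => /eqP.
have /eqP : - x 14%N = 0 by expand_row 11%N; rewrite x1 x3 x7 x9; ring.
by rewrite oppr_eq0 => /eqP.
Qed.

Lemma flat_ker_eq0 k : (k < 15)%N -> x k = 0.
Proof.
have [[x0 x1] [x2 x3] [x6 x7]] := flat_ker_trace; have [x4 x10 x12 x13] := flat_ker_traction.
have [x5 x9 x11] := flat_ker_divergence; have [x8 x14] := flat_ker_momentum.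
rewrite x5 mulr0 in x12; rewrite x11 mulr0 in x13.
by do 15! (case: k => [_|k]; first done).
Qed.

End FlatKernel.

Lemma colloc_mx_flat_unit {R : realFieldType} (lam s : R) (eta1 eta2 : nat -> R)
    (eta3 : R) (xi : nat -> pt R) :
  s != 0 -> eta1 0%N != eta1 1%N -> eta1 0%N != eta1 2%N -> eta1 1%N != eta1 2%N ->
  eta2 0%N != eta2 1%N -> ~ collinear (xi 0%N) (xi 1%N) (xi 2%N) ->
  colloc_mx lam (0, s) (fun k => (eta1 k, 0)) (fun k => (eta2 k, 0)) (eta3, 0) xi 1
    \in unitmx.
Proof.
move=> s0 e01 e02 e12 e2 xi_nc; rewrite -unitmx_tr -row_free_unit.
apply: inj_row_free => v vM0; pose x k : R := v 0 (inord k).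
have x_ker i : (i < 15)%N -> \sum_(j < 15) colloc_entry lam (0, s)
    (fun k => (eta1 k, 0)) (fun k => (eta2 k, 0)) (eta3, 0) xi 1 i j * x j = 0.
  move=> lti; have := congr1 (fun u : 'rV[R]_15 => u 0 (Ordinal lti)) vM0.
  rewrite !mxE => vM0i; rewrite -[RHS]vM0i; apply: eq_bigr => j _.
  by rewrite !mxE /x inord_val mulrC.
apply/rowP => j; rewrite mxE -[j]inord_val.
exact: flat_ker_eq0 x_ker e01 e02 e12 e2 s0 xi_nc _ (ltn_ord j).
Qed.

Theorem mainTheorem3 (R : realFieldType) (lam : R) (n : R * R)
    (eta1 : nat -> R) (eta2 : nat -> R) (eta3 : R) (xi : nat -> R * R) :
  0 <= lam ->
  (n = (0, 1) \/ n = (0, -1)) ->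
  (forall k l, (k < 3)%N -> (l < 3)%N -> k <> l -> eta1 k <> eta1 l) ->
  eta2 0%N <> eta2 1%N ->
  ~ collinear (xi 0%N) (xi 1%N) (xi 2%N) ->
  (forall Rad : R, 0 < Rad ->
     (forall k, (k < 3)%N -> in_disc Rad (eta1 k * Rad, 0)) /\
     (forall k, (k < 2)%N -> in_disc Rad (eta2 k * Rad, 0)) /\
     in_disc Rad (eta3 * Rad, 0) /\
     (forall k, (k < 3)%N -> in_disc Rad (scalept Rad (xi k)))) ->
  let M := fun Rad : R =>
    colloc_mx lam n (fun k => (eta1 k * Rad, 0)) (fun k => (eta2 k * Rad, 0))
      (eta3 * Rad, 0) (fun k => scalept Rad (xi k)) Rad in
  (forall R1 R2 : R, 0 < R1 -> 0 < R2 -> M R1 = M R2) /\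
  (forall Rad : R, 0 < Rad -> M Rad \in unitmx).
Proof.
move=> _ n_vert eta1_inj eta2_neq xi_nc _.
have [s [-> s_neq0]] : exists s : R, n = (0, s) /\ s != 0.
  by case: n_vert => ->; [exists 1 | exists (-1)]; rewrite ?oppr_eq0 oner_eq0.
move=> M.
have M_flat Rad : 0 < Rad -> M Rad = colloc_mx lam (0, s) (fun k => (eta1 k, 0))
    (fun k => (eta2 k, 0)) (eta3, 0) xi 1.
  move=> /gt_eqF/negbT Rad_neq0.
  by apply: colloc_mx_rescale => *; rewrite ?sdiv_mull ?sdiv_scalept.
split=> [R1 R2 /M_flat -> /M_flat -> // | Rad /M_flat ->].
by apply: colloc_mx_flat_unit => //; apply/eqP => //; apply: eta1_inj.
Qed.
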